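(* Let $m_1,m_2,m_3\ge 1$ be integers and let $a\neq b$ be complex numbers. (a) If $T_{m_1}(a)=T_{m_1}(b)$ and $T_{m_2}(a)=T_{m_2}(b)$, then either $T_l(a)=T_l(b)$ for $l=\gcd(m_1,m_2)$, or $T_{m_1m_2}'(a)=T_{m_1m_2}'(b)=0$. (b) If $T_{m_j}(a)=T_{m_j}(b)$ for $j=1,2,3$, then there exist distinct indices $i_1,i_2\in\{1,2,3\}$ such that $T_l(a)=T_l(b)$ for $l=\gcd(m_{i_1},m_{i_2})$.
   Context: $T_n$ denotes the Chebyshev polynomial of the first kind of degree $n$, defined by $T_n(\cos\phi)=\cos(n\phi)$. *)

From HB Require Import structures.
From mathcomp Require Import all_boot all_order all_algebra.
Set Implicit Arguments. Unset Strict Implicit. Unset Printing Implicit Defensive.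
Import Order.TTheory GRing.Theory Num.Theory.
Local Open Scope ring_scope.

(* Chebyshev polynomials of the first kind, via the standard recurrence
   T_0 = 1, T_1 = X, T_(n+2) = 2 X T_(n+1) - T_n
   (the unique polynomials with T_n(cos phi) = cos(n phi)). *)
Fixpoint cheb_pair (R : nzRingType) (n : nat) : {poly R} * {poly R} :=
  match n with
  | 0 => (1, 'X)
  | n'.+1 => let: (p, q) := cheb_pair R n' in (q, 'X *+ 2 * q - p)
  end.

Definition chebT (R : nzRingType) (n : nat) : {poly R} := (cheb_pair R n).1.

From HB Require Import structures.
From mathcomp Require Import all_boot all_order all_algebra.
From mathcomp Require Import ring.
Set Implicit Arguments.
Unset Strict Implicit.
Unset Printing Implicit Defensive.
Import Order.TTheory GRing.Theory Num.Theory.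
Local Open Scope ring_scope.

(* Every complex a is (u + 1/u)/2 for some u != 0, and T_n((u + 1/u)/2) =
   (u^n + u^-n)/2.  Hence T_m(a) = T_m(b), with b = (v + 1/v)/2, says that u/v
   or uv is an m-th root of unity.  If u/v (or uv) is both an m1-th and an m2-th
   root of unity, it is a gcd(m1,m2)-th one and T_gcd(a) = T_gcd(b); among three
   indices two must use the same alternative, which gives (b).  In the mixed
   case u/v and uv are both (m1 m2)-th roots of unity, so u^2 and v^2 are too,
   and T'_N((u + 1/u)/2) (u - 1/u) = N (u^N - u^-N) vanishes for N = m1 m2;
   the degenerate cases u^2 = 1 or v^2 = 1 fall back to the gcd alternative. *)

Lemma chebTSS (R : nzRingType) n :
  chebT R n.+2 = 'X *+ 2 * chebT R n.+1 - chebT R n.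
Proof. by rewrite /chebT /=; case: (cheb_pair R n). Qed.

Lemma expr_gcd_eq1 (R : nzRingType) (x : R) m n :
  x ^+ m = 1 -> x ^+ n = 1 -> x ^+ gcdn m n = 1.
Proof.
case: m => [|m] xm xn; first by rewrite gcd0n.
have [a _ /dvdnP [k def_k]] := Bezoutl n (ltn0Sn m).
have : x ^+ (gcdn m.+1 n + a * n) = 1 by rewrite def_k mulnC exprM xm expr1n.
by rewrite exprD mulnC exprM xn expr1n mulr1.
Qed.

Lemma pigeonhole_bool (I : finType) (f : I -> bool) :
  (2 < #|I|)%N -> exists i j, i != j /\ f i = f j.
Proof.
move=> I_gt2; have /injectivePn [i [j neq_ij eq_f]] : ~~ injectiveb f.
  by apply/injectiveP => /leq_card; rewrite card_bool leqNgt I_gt2.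
by exists i, j.
Qed.

Section Joukowski.
Variable F : fieldType.
Hypothesis two_neq0 : (2 : F) != 0.

Definition joukowski (u : F) : F := (u + u^-1) / 2.

Lemma chebT_joukowski u n : u != 0 ->
  (chebT F n).[joukowski u] = (u ^+ n + u^-1 ^+ n) / 2.
Proof.
move=> u_neq0.
suff IH : forall n, (chebT F n).[joukowski u] = (u ^+ n + u^-1 ^+ n) / 2 /\
   (chebT F n.+1).[joukowski u] = (u ^+ n.+1 + u^-1 ^+ n.+1) / 2.
  by case: (IH n).
elim=> [|k [IHk IHk1]].
  rewrite /chebT /= !hornerE /joukowski; split => //.
  by field; rewrite two_neq0 u_neq0.
split => //; rewrite chebTSS !hornerE IHk IHk1 /joukowski !exprS.
by field; rewrite two_neq0 u_neq0.
Qed.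

Lemma chebT'_joukowski u n : u != 0 ->
  (chebT F n)^`().[joukowski u] * (u - u^-1) = n%:R * (u ^+ n - u^-1 ^+ n).
Proof.
move=> u_neq0.
suff IH : forall n,
    (chebT F n)^`().[joukowski u] * (u - u^-1) = n%:R * (u ^+ n - u^-1 ^+ n) /\
    (chebT F n.+1)^`().[joukowski u] * (u - u^-1) =
      n.+1%:R * (u ^+ n.+1 - u^-1 ^+ n.+1).
  by case: (IH n).
elim=> [|k [IHk IHk1]].
  by rewrite /chebT /= derivC derivX !hornerE; split.
split => //; rewrite chebTSS !derivE !hornerE mulrBl mulrDl -!mulrA IHk IHk1.
rewrite chebT_joukowski // /joukowski -!natr1 !exprS.
set p := u ^+ k; set q := u^-1 ^+ k.
by field; rewrite two_neq0 u_neq0.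
Qed.

Lemma chebT_joukowski_eq u v m : u != 0 -> v != 0 ->
  (chebT F m).[joukowski u] = (chebT F m).[joukowski v] <->
  (u / v) ^+ m = 1 \/ (u * v) ^+ m = 1.
Proof.
move=> u_neq0 v_neq0; rewrite !chebT_joukowski // exprMn exprMn !exprVn.
have um_neq0 : u ^+ m != 0 by rewrite expf_neq0.
have vm_neq0 : v ^+ m != 0 by rewrite expf_neq0.
move: um_neq0 vm_neq0; set p := u ^+ m; set q := v ^+ m => p_neq0 q_neq0.
have factor :
    (p - q) * (p * q - 1) = p * q * ((p + p^-1) / 2 - (q + q^-1) / 2) * 2.
  by field; rewrite two_neq0 p_neq0 q_neq0.
split => [eq_T|[pq1|pq1]].
- have /eqP : (p - q) * (p * q - 1) = 0 by rewrite factor eq_T subrr mulr0 mul0r.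
  rewrite mulf_eq0 !subr_eq0 => /orP [/eqP ->|/eqP ->]; last by right.
  by left; rewrite mulfV.
- by rewrite -[p](divfK q_neq0) pq1 mul1r.
- have pV : p^-1 = q by apply: (mulfI p_neq0); rewrite mulfV // pq1.
  have qV : q^-1 = p by apply: (mulfI q_neq0); rewrite mulfV // mulrC pq1.
  by rewrite pV qV addrC.
Qed.

Lemma chebT'_joukowski_eq0 u N :
  u != 0 -> u ^+ 2 != 1 -> (u ^+ 2) ^+ N = 1 ->
  (chebT F N)^`().[joukowski u] = 0.
Proof.
move=> u_neq0 u2_neq1 u2N.
have uN_neq0 : u ^+ N != 0 by rewrite expf_neq0.
have uVN : u^-1 ^+ N = u ^+ N.
  rewrite exprVn; apply: (mulfI uN_neq0).
  by rewrite mulfV // -exprD addnn -mul2n exprM.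
have /eqP := chebT'_joukowski N u_neq0; rewrite uVN subrr mulr0 mulf_eq0.
case/orP => [/eqP //|]; rewrite subr_eq0 => /eqP uV.
by move: u2_neq1; rewrite expr2 {2}uV mulfV ?eqxx.
Qed.

Lemma root_of_unity_gcd_or_chebT'_eq0 u v m1 m2 : u != 0 -> v != 0 ->
  (u / v) ^+ m1 = 1 -> (u * v) ^+ m2 = 1 ->
  ((u / v) ^+ gcdn m1 m2 = 1 \/ (u * v) ^+ gcdn m1 m2 = 1) \/
  ((chebT F (m1 * m2))^`().[joukowski u] = 0 /\
   (chebT F (m1 * m2))^`().[joukowski v] = 0).
Proof.
move=> u_neq0 v_neq0 x_m1 y_m2.
have x_neq0 : u / v != 0 by rewrite mulf_neq0 ?invr_eq0.
have u2 : u ^+ 2 = (u / v) * (u * v) by field; rewrite v_neq0.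
have v2 : v ^+ 2 = (u * v) / (u / v) by field; rewrite u_neq0 v_neq0.
have x_N : (u / v) ^+ (m1 * m2) = 1 by rewrite exprM x_m1 expr1n.
have y_N : (u * v) ^+ (m1 * m2) = 1 by rewrite mulnC exprM y_m2 expr1n.
have [/eqP u2_eq1|u2_neq1] := boolP (u ^+ 2 == 1).
  have yE : u * v = (u / v)^-1 by apply: (mulfI x_neq0); rewrite mulfV // -u2.
  by left; right; apply: expr_gcd_eq1; rewrite // yE exprVn x_m1 invr1.
have [/eqP v2_eq1|v2_neq1] := boolP (v ^+ 2 == 1).
  have vV : v^-1 = v by apply: (mulfI v_neq0); rewrite mulfV // -expr2 v2_eq1.
  by left; left; apply: expr_gcd_eq1; rewrite // vV.
right; split; apply: chebT'_joukowski_eq0 => //.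
  by rewrite u2 exprMn x_N y_N mulr1.
by rewrite v2 exprMn exprVn x_N y_N invr1 mulr1.
Qed.

Lemma chebT_joukowski_gcd_or_critical u v m1 m2 : u != 0 -> v != 0 ->
  (chebT F m1).[joukowski u] = (chebT F m1).[joukowski v] ->
  (chebT F m2).[joukowski u] = (chebT F m2).[joukowski v] ->
  (chebT F (gcdn m1 m2)).[joukowski u] =
    (chebT F (gcdn m1 m2)).[joukowski v] \/
  ((chebT F (m1 * m2))^`().[joukowski u] = 0 /\
   (chebT F (m1 * m2))^`().[joukowski v] = 0).
Proof.
move=> u_neq0 v_neq0.
have T_eq m := chebT_joukowski_eq m u_neq0 v_neq0.
have critical m m' := @root_of_unity_gcd_or_chebT'_eq0 u v m m' u_neq0 v_neq0.
move=> /T_eq [x1|y1] /T_eq [x2|y2].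
- by left; apply/T_eq; left; apply: expr_gcd_eq1.
- by case: (critical _ _ x1 y2) => [/T_eq|]; auto.
- rewrite gcdnC mulnC.
  by case: (critical _ _ x2 y1) => [/T_eq|]; auto.
- by left; apply/T_eq; right; apply: expr_gcd_eq1.
Qed.

Lemma chebT_joukowski_gcd_of_pair u v (I : finType) (m : I -> nat) :
  u != 0 -> v != 0 -> (2 < #|I|)%N ->
  (forall i, (chebT F (m i)).[joukowski u] = (chebT F (m i)).[joukowski v]) ->
  exists i j, i != j /\
    (chebT F (gcdn (m i) (m j))).[joukowski u] =
    (chebT F (gcdn (m i) (m j))).[joukowski v].
Proof.
move=> u_neq0 v_neq0 I_gt2 eq_T.
have [i [j [neq_ij eq_x]]] :=
  pigeonhole_bool (fun i => (u / v) ^+ m i == 1) I_gt2.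
exists i, j; split => //; apply/chebT_joukowski_eq => //.
have y_of k : (u / v) ^+ m k != 1 -> (u * v) ^+ m k = 1.
  by move=> /eqP x_k; case/(chebT_joukowski_eq _ u_neq0 v_neq0): (eq_T k).
case: eqVneq eq_x => [x_i /esym/eqP x_j|x_i /esym/negbT x_j].
  by left; apply: expr_gcd_eq1.
by right; apply: expr_gcd_eq1; apply: y_of.
Qed.

End Joukowski.

Lemma joukowski_surj (C : numClosedFieldType) (a : C) :
  exists2 u : C, u != 0 & a = joukowski u.
Proof.
have s2 := sqrtCK (a ^+ 2 - 1); set s := sqrtC _ in s2.
have uw : (a + s) * (2 * a - (a + s)) = 1.
  have -> : (a + s) * (2 * a - (a + s)) = a ^+ 2 - s ^+ 2 by ring.
  by rewrite s2; ring.
have u_neq0 : a + s != 0.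
  by apply: contra_eq_neq uw => ->; rewrite mul0r eq_sym oner_eq0.
exists (a + s) => //; rewrite /joukowski.
have -> : (a + s)^-1 = 2 * a - (a + s).
  by apply: (mulfI u_neq0); rewrite mulfV // uw.
by field.
Qed.

Theorem lemma2p1 (C : numClosedFieldType) (m1 m2 m3 : nat) (a b : C)
  (hm1 : (0 < m1)%N) (hm2 : (0 < m2)%N) (hm3 : (0 < m3)%N) (hab : a != b) :
  ((chebT C m1).[a] = (chebT C m1).[b] ->
   (chebT C m2).[a] = (chebT C m2).[b] ->
   (chebT C (gcdn m1 m2)).[a] = (chebT C (gcdn m1 m2)).[b]
   \/ ((chebT C (m1 * m2))^`().[a] = 0 /\ (chebT C (m1 * m2))^`().[b] = 0))
  /\
  ((chebT C m1).[a] = (chebT C m1).[b] ->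
   (chebT C m2).[a] = (chebT C m2).[b] ->
   (chebT C m3).[a] = (chebT C m3).[b] ->
   exists i1 i2 : 'I_3, i1 != i2 /\
     let l := gcdn (nth 0%N [:: m1; m2; m3] i1) (nth 0%N [:: m1; m2; m3] i2) in
     (chebT C l).[a] = (chebT C l).[b]).
Proof.
have two_neq0 : (2 : C) != 0 by rewrite pnatr_eq0.
have [u u_neq0 ->] := joukowski_surj a.
have [v v_neq0 ->] := joukowski_surj b.
split; first exact: chebT_joukowski_gcd_or_critical.
move=> eq1 eq2 eq3.
apply: (chebT_joukowski_gcd_of_pair two_neq0 u_neq0 v_neq0).
  by rewrite card_ord.
by case=> [[|[|[|]]]].
Qed.
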